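(* Let $\{x^k\}$ be generated by Algorithm IRG with the backtracking stepsize rule, and assume $\rho_k\to0$. Suppose there is an infinite set $J\subset\mathbb N$ such that $x^k\to\bar x$ along $J$, and that $\nabla f$ is Lipschitz continuous on some neighborhood of $\bar x$. Then $\{t_k\}_{k\in J}$ is bounded away from zero, i.e. $\inf_{k\in J}t_k>0$.
   Context: Algorithm IRG (general inexact reduced gradient framework). Let $f:\mathbb R^n\to\mathbb R$ be continuously differentiable. Parameters: initial point $x^1\in\mathbb R^n$, initial radii $\varepsilon_1>0$, $r_1>0$, reduction factors $\mu,\theta\in(0,1)$, and a sequence $\{\rho_k\}$ of positive numbers. For $k=1,2,\dots$: (1) choose $g^k\in\mathbb R^n$ with $\|g^k-\nabla f(x^k)\|\le\min\{\varepsilon_k,\rho_k\}$; (2) if $\|g^k\|\le r_k+\varepsilon_k$, set $r_{k+1}=\mu r_k$, $\varepsilon_{k+1}=\theta\varepsilon_k$, $d^k=0$; otherwise set $r_{k+1}=r_k$, $\varepsilon_{k+1}=\varepsilon_k$ and $d^k=-\frac{\|g^k\|-\varepsilon_k}{\|g^k\|}g^k$; (3) choose a stepsize $t_k>0$ by some rule; (4) set $x^{k+1}=x^k+t_kd^k$. Backtracking stepsize rule: fix $\beta,\gamma,\tau\in(0,1)$; if $d^k=0$ set $t_k=\tau$; otherwise $t_k=\max\{t\in\{1,\gamma,\gamma^2,\dots\}: f(x^k+td^k)\le f(x^k)-\beta t\|d^k\|^2\}$. *)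

From HB Require Import structures.
From mathcomp Require Import all_boot all_order all_algebra.
From mathcomp Require Import reals.
Set Implicit Arguments. Unset Strict Implicit. Unset Printing Implicit Defensive.
Import Order.TTheory GRing.Theory Num.Theory.
Local Open Scope ring_scope.

Definition dotv {R : realType} {n : nat} (u v : 'rV[R]_n) : R :=
  \sum_(i < n) u 0 i * v 0 i.
Definition enorm {R : realType} {n : nat} (u : 'rV[R]_n) : R :=
  Num.sqrt (dotv u u).

Definition has_gradient {R : realType} {n : nat}
  (f : 'rV[R]_n -> R) (grad : 'rV[R]_n -> 'rV[R]_n) : Prop :=
  forall x (e : R), 0 < e -> exists2 delta : R, 0 < delta &
    forall y, enorm (y - x) < delta ->
      `| f y - f x - dotv (grad x) (y - x) | <= e * enorm (y - x).

Definition vcontinuous {R : realType} {n : nat} (g : 'rV[R]_n -> 'rV[R]_n) : Prop :=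
  forall x (e : R), 0 < e -> exists2 delta : R, 0 < delta &
    forall y, enorm (y - x) < delta -> enorm (g y - g x) < e.

Definition C1_with_gradient {R : realType} {n : nat}
  (f : 'rV[R]_n -> R) (grad : 'rV[R]_n -> 'rV[R]_n) : Prop :=
  has_gradient f grad /\ vcontinuous grad.

Definition lipschitz_near {R : realType} {n : nat}
  (grad : 'rV[R]_n -> 'rV[R]_n) (xbar : 'rV[R]_n) : Prop :=
  exists delta : R, exists L : R, 0 < delta /\
    forall y z, enorm (y - xbar) < delta -> enorm (z - xbar) < delta ->
      enorm (grad y - grad z) <= L * enorm (y - z).

(* Iterates of Algorithm IRG, indexed from k = 0 (the paper's k = 1). *)
Definition IRG_iterates {R : realType} {n : nat}
  (f : 'rV[R]_n -> R) (grad : 'rV[R]_n -> 'rV[R]_n)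
  (mu theta : R) (rho : nat -> R)
  (x g d : nat -> 'rV[R]_n) (eps r t : nat -> R) : Prop :=
  0 < eps 0%N /\ 0 < r 0%N /\ 0 < mu < 1 /\ 0 < theta < 1 /\
  (forall k, 0 < rho k) /\
  forall k : nat,
    enorm (g k - grad (x k)) <= Num.min (eps k) (rho k) /\
    (if enorm (g k) <= r k + eps k then
       [/\ r k.+1 = mu * r k, eps k.+1 = theta * eps k & d k = 0]
     else
       [/\ r k.+1 = r k, eps k.+1 = eps k &
           d k = - ((enorm (g k) - eps k) / enorm (g k)) *: g k]) /\
    0 < t k /\
    x k.+1 = x k + t k *: d k.

Definition armijo {R : realType} {n : nat} (f : 'rV[R]_n -> R) (beta : R)
  (xk dk : 'rV[R]_n) (s : R) : Prop :=
  f (xk + s *: dk) <= f xk - beta * s * enorm dk ^+ 2.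

Definition backtracking {R : realType} {n : nat} (f : 'rV[R]_n -> R)
  (beta gamma tau : R) (x d : nat -> 'rV[R]_n) (t : nat -> R) : Prop :=
  0 < beta < 1 /\ 0 < gamma < 1 /\ 0 < tau < 1 /\
  forall k : nat,
    if d k == 0 then t k = tau
    else exists j : nat,
      [/\ t k = gamma ^+ j, armijo f beta (x k) (d k) (gamma ^+ j) &
          forall i : nat, (i < j)%N -> ~ armijo f beta (x k) (d k) (gamma ^+ i)].

(* Near xbar the gradient is L-Lipschitz, so a step s along the inexact
   direction d^k decreases f by at least s (1 - L s) |d^k|^2 as long as the
   segment stays in the Lipschitz ball.  Hence the Armijo test can only fail at
   a trial step s with s >= (1 - beta)/L, or with s |d^k| of the size of the
   ball, and |d^k| <= |grad f(x^k)| is bounded near xbar; after one more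
   backtracking factor gamma this bounds t_k from below for the k in J that are
   close to xbar, while the finitely many remaining t_k are positive. *)
From HB Require Import structures.
From mathcomp Require Import all_boot all_order all_algebra.
From mathcomp Require Import all_classical all_reals all_analysis.
From mathcomp Require Import ring lra.
Import Order.TTheory GRing.Theory Num.Theory.
Import numFieldNormedType.Exports.
Local Open Scope classical_set_scope.
Local Open Scope ring_scope.

Section EuclideanNorm.
Context {R : realType} {n : nat}.
Implicit Types u v w : 'rV[R]_n.

Lemma dotvC u v : dotv u v = dotv v u.
Proof. by apply: eq_bigr => i _; rewrite mulrC. Qed.

Lemma dotvDl u v w : dotv (u + v) w = dotv u w + dotv v w.
Proof. by rewrite /dotv -big_split; apply: eq_bigr => i _; rewrite mxE mulrDl. Qed.

Lemma dotvZl a u v : dotv (a *: u) v = a * dotv u v.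
Proof. by rewrite /dotv mulr_sumr; apply: eq_bigr => i _; rewrite mxE mulrA. Qed.

Lemma dotvBl u v w : dotv (u - v) w = dotv u w - dotv v w.
Proof. by rewrite dotvDl -scaleN1r dotvZl mulN1r. Qed.

Lemma dotvDr u v w : dotv w (u + v) = dotv w u + dotv w v.
Proof. by rewrite dotvC dotvDl !(dotvC w). Qed.

Lemma dotvZr a u v : dotv v (a *: u) = a * dotv v u.
Proof. by rewrite dotvC dotvZl dotvC. Qed.

Lemma dotv_ge0 u : 0 <= dotv u u.
Proof. by apply: sumr_ge0 => i _; rewrite -expr2 sqr_ge0. Qed.

Lemma enorm_ge0 u : 0 <= enorm u.
Proof. exact: sqrtr_ge0. Qed.

Lemma enorm_sqr u : enorm u ^+ 2 = dotv u u.
Proof. by rewrite sqr_sqrtr // dotv_ge0. Qed.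

(* Lagrange's identity: twice the Cauchy-Schwarz defect is a sum of squares. *)
Lemma sqr_dotv_le u v : dotv u v ^+ 2 <= dotv u u * dotv v v.
Proof.
set a := fun i : 'I_n => u 0 i; set b := fun i : 'I_n => v 0 i.
have defect : dotv u u * dotv v v - dotv u v ^+ 2 =
    \sum_(i < n) \sum_(j < n) (a i ^+ 2 * b j ^+ 2 - a i * b i * (a j * b j)).
  rewrite expr2 /dotv !mulr_suml -sumrB; apply: eq_bigr => i _.
  by rewrite !mulr_sumr -sumrB; apply: eq_bigr => j _; rewrite /a /b; ring.
have lagrange : (dotv u u * dotv v v - dotv u v ^+ 2) *+ 2 =
    \sum_(i < n) \sum_(j < n) (a i * b j - a j * b i) ^+ 2.
  rewrite mulr2n {1}defect defect [in X in _ + X]exchange_big /= -big_split /=.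
  by apply: eq_bigr => i _; rewrite -big_split /=; apply: eq_bigr => j _; ring.
have : 0 <= (dotv u u * dotv v v - dotv u v ^+ 2) *+ 2.
  by rewrite lagrange; apply: sumr_ge0 => i _; apply: sumr_ge0 => j _; exact: sqr_ge0.
by rewrite pmulrn_lge0 // subr_ge0.
Qed.

Lemma dotv_le_enormM u v : dotv u v <= enorm u * enorm v.
Proof.
apply: le_trans (ler_norm _) _.
rewrite /enorm -sqrtrM ?dotv_ge0 // -sqrtr_sqr.
exact/ler_wsqrtr/sqr_dotv_le.
Qed.

Lemma enormZ a u : enorm (a *: u) = `|a| * enorm u.
Proof.
by rewrite /enorm dotvZl dotvZr mulrA -expr2 sqrtrM ?sqr_ge0 // sqrtr_sqr.
Qed.

Lemma enorm0 : enorm (0 : 'rV[R]_n) = 0.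
Proof. by rewrite -(scale0r (0 : 'rV[R]_n)) enormZ normr0 mul0r. Qed.

Lemma enormD u v : enorm (u + v) <= enorm u + enorm v.
Proof.
rewrite -(@ler_pXn2r _ 2) ?nnegrE ?addr_ge0 ?enorm_ge0 //.
rewrite enorm_sqr dotvDl !dotvDr sqrrD !enorm_sqr (dotvC v u).
have := dotv_le_enormM u v; lra.
Qed.

Lemma enorm_le_addB u v : enorm u <= enorm v + enorm (u - v).
Proof. by have := enormD v (u - v); rewrite addrC subrK. Qed.

End EuclideanNorm.

Lemma is_derive_of_linear_approx (R : realType) (phi : R -> R) (s a : R) :
  (forall e : R, 0 < e -> exists2 del : R, 0 < del &
     forall h, `|h| < del -> `|phi (h + s) - phi s - a * h| <= e * `|h|) ->
  is_derive s 1 phi a.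
Proof.
move=> approx.
have quotient_cvg :
    (fun h : R => h^-1 *: ((phi \o shift s) (h *: 1) - phi s)) @ 0^' --> a.
  apply/cvgrPdist_le => e e0.
  have [del del0 Hdel] := approx e e0.
  near=> h.
  have h_neq0 : h != 0 by near: h; exact: nbhs_dnbhs_neq.
  have h_small : `|h| < del by near: h; apply: dnbhs0_lt.
  rewrite /= /shift -[h *: 1]/(h * 1) mulr1.
  have -> : a - h^-1 * (phi (h + s) - phi s) =
            - (h^-1 * (phi (h + s) - phi s - a * h)).
    by rewrite [in RHS]mulrBr opprB [h^-1 * (a * h)]mulrC -mulrA mulfV // mulr1.
  rewrite normrN normrM normrV ?unitfE // ler_pdivrMl ?normr_gt0 //.
  by rewrite [`|h| * e]mulrC; exact: Hdel.
have derivable_phi : derivable phi s 1 by exact: cvgP quotient_cvg.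
have <- : 'D_1 phi s = a by exact: cvg_lim quotient_cvg.
exact: derivableP.
Unshelve. all: by end_near.
Qed.

Lemma backtracking_step_ge {R : realType} {P : R -> Prop} {gamma c : R} {j : nat} :
  0 < gamma ->
  (forall s, 0 < s -> ~ P s -> c <= s) ->
  (forall i, (i < j)%N -> ~ P (gamma ^+ i)) ->
  Num.min 1 (gamma * c) <= gamma ^+ j.
Proof.
move=> gamma0 fail_ge; case: j => [|j] fails; first by rewrite expr0 ge_min lexx.
rewrite exprS ge_min; apply/orP; right.
have := fail_ge _ (exprn_gt0 j gamma0) (fails _ (ltnSn j)).
by apply: ler_wpM2l; exact: ltW.
Qed.

Section InexactDirection.
Context {R : realType} {n : nat} {g gx : 'rV[R]_n} {eps : R}.
Hypotheses (g_close : enorm (g - gx) <= eps) (eps_lt : eps < enorm g).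

Let al := (enorm g - eps) / enorm g.

Let eps_ge0 : 0 <= eps.
Proof. exact: le_trans (enorm_ge0 _) g_close. Qed.

Let al_ge0 : 0 <= al.
Proof. by rewrite divr_ge0 ?enorm_ge0 // subr_ge0 ltW. Qed.

Let al_enorm : al * enorm g = enorm g - eps.
Proof. by rewrite /al mulrC mulrCA mulfV ?mulr1 // gt_eqF // (le_lt_trans eps_ge0). Qed.

Lemma enorm_shortened_dir : enorm (- al *: g) = enorm g - eps.
Proof. by rewrite enormZ normrN ger0_norm. Qed.

Lemma enorm_shortened_dir_le : enorm (- al *: g) <= enorm gx.
Proof.
rewrite enorm_shortened_dir lerBlDr.
by apply: le_trans (enorm_le_addB g gx) _; rewrite lerD2l.
Qed.

(* By Cauchy-Schwarz <gx, g> >= |g|^2 - eps |g|, and the shortening factor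
   turns this lower bound into exactly the squared length of the direction. *)
Lemma shortened_dir_descent : dotv gx (- al *: g) <= - dotv (- al *: g) (- al *: g).
Proof.
rewrite -enorm_sqr enorm_shortened_dir dotvZr.
have gx_g : enorm g ^+ 2 - eps * enorm g <= dotv gx g.
  have := dotv_le_enormM (g - gx) g; rewrite dotvBl -enorm_sqr.
  have := ler_wpM2r (enorm_ge0 g) g_close; lra.
have : al * (enorm g ^+ 2 - eps * enorm g) <= al * dotv gx g by exact: ler_wpM2l.
have -> : al * (enorm g ^+ 2 - eps * enorm g) = (enorm g - eps) ^+ 2.
  by transitivity (al * enorm g * (enorm g - eps)); [ring | rewrite al_enorm].
lra.
Qed.

End InexactDirection.

Section LipschitzGradient.
Context {R : realType} {n : nat} {f : 'rV[R]_n -> R} {grad : 'rV[R]_n -> 'rV[R]_n}.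
Context {xbar : 'rV[R]_n} {del L : R}.
Hypotheses (f_grad : has_gradient f grad) (del_gt0 : 0 < del) (L_gt0 : 0 < L).
Hypothesis grad_lip : forall y z, enorm (y - xbar) < del -> enorm (z - xbar) < del ->
  enorm (grad y - grad z) <= L * enorm (y - z).

Lemma is_derive_along_line x d (s : R) :
  is_derive s 1 (fun s => f (x + s *: d)) (dotv (grad (x + s *: d)) d).
Proof.
apply: is_derive_of_linear_approx => e e0.
have K0 : 0 < enorm d + 1 by rewrite ltr_wpDl ?enorm_ge0.
have [r r0 Hr] := f_grad (x + s *: d) _ (divr_gt0 e0 K0).
exists (r / (enorm d + 1)); first by rewrite divr_gt0.
move=> h h_small.
have step : x + (h + s) *: d - (x + s *: d) = h *: d by rewrite scalerDl addrCA addrK.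
have step_small : enorm (h *: d) < r.
  rewrite enormZ; apply: le_lt_trans (_ : `|h| * (enorm d + 1) < r).
    by rewrite ler_wpM2l // lerDl.
  by rewrite -ltr_pdivlMr.
have := Hr (x + (h + s) *: d); rewrite step => /(_ step_small).
rewrite dotvZr [h * _]mulrC enormZ => /le_trans; apply.
have -> : e / (enorm d + 1) * (`|h| * enorm d) =
          (e * `|h|) * (enorm d / (enorm d + 1)) by ring.
apply: ler_piMr; first by rewrite mulr_ge0 // ltW.
by rewrite ler_pdivrMr // mul1r lerDl.
Qed.

Lemma enorm_grad_le x : enorm (x - xbar) < del ->
  enorm (grad x) <= enorm (grad xbar) + L * del.
Proof.
move=> x_near; apply: le_trans (enorm_le_addB _ (grad xbar)) _; rewrite lerD2l.
have xbar_near : enorm (xbar - xbar) < del.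
  by rewrite subrr enorm0 (le_lt_trans (enorm_ge0 _) x_near).
apply: le_trans (grad_lip _ _ x_near xbar_near) _.
by apply: ler_wpM2l; exact: ltW.
Qed.

(* Mean value theorem on s |-> f (x + s d), then the Lipschitz bound on the
   gradient at the intermediate point. *)
Lemma lipschitz_descent x d s : 0 < s ->
  enorm (x - xbar) + s * enorm d < del ->
  f (x + s *: d) - f x <= s * (dotv (grad x) d + L * s * dotv d d).
Proof.
move=> s0 in_ball.
have [c c_in mvt] := MVT s0 (fun z _ => is_derive_along_line x d z)
  (derivable_within_continuous
     (fun z _ => @ex_derive _ _ _ _ _ _ _ (is_derive_along_line x d z))).
move: c_in; rewrite in_itv /= => /andP [c0 cs].
move: mvt; rewrite scale0r addr0 subr0 => ->; rewrite mulrC ler_pM2l //.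
rewrite -[X in dotv X _](subrK (grad x)) dotvDl addrC lerD2l.
apply: le_trans (dotv_le_enormM _ _) _.
have x_near : enorm (x - xbar) < del.
  by apply: le_lt_trans _ in_ball; rewrite lerDl mulr_ge0 ?enorm_ge0 ?ltW.
have xc_near : enorm (x + c *: d - xbar) < del.
  apply: le_lt_trans _ in_ball; rewrite addrAC; apply: le_trans (enormD _ _) _.
  rewrite lerD2l enormZ (ger0_norm (ltW c0)).
  by apply: ler_wpM2r; [exact: enorm_ge0 | exact: ltW].
apply: le_trans (ler_wpM2r (enorm_ge0 _) (grad_lip _ _ xc_near x_near)) _.
rewrite addrAC subrr add0r enormZ (ger0_norm (ltW c0)) -enorm_sqr expr2 !mulrA.
do 2 (apply: ler_wpM2r; first exact: enorm_ge0).
by apply: ler_wpM2l; exact: ltW.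
Qed.

Lemma armijo_fail_ge beta x d M s :
  0 < beta < 1 -> enorm (x - xbar) <= del / 2 ->
  dotv (grad x) d <= - dotv d d -> 0 < enorm d <= M ->
  0 < s -> ~ armijo f beta x d s -> Num.min ((1 - beta) / L) (del / (2 * M)) <= s.
Proof.
move=> /andP[beta0 beta1] x_near descent /andP[d0 dM] s0 not_armijo.
have M0 : 0 < M by apply: lt_le_trans dM.
rewrite ge_min; case: (lerP (del / 2) (s * enorm d)) => long_step.
  apply/orP; right; rewrite ler_pdivrMr ?mulr_gt0 //.
  have : s * enorm d <= s * M by apply: ler_wpM2l; [exact: ltW | exact: dM].
  lra.
apply/orP; left.
have in_ball : enorm (x - xbar) + s * enorm d < del by lra.
have decrease := lipschitz_descent x d s s0 in_ball.
have increase : f x - beta * s * dotv d d < f (x + s *: d).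
  by rewrite -enorm_sqr ltNge; apply/negP.
have D0 : 0 < s * dotv d d by rewrite -enorm_sqr mulr_gt0 ?exprn_gt0.
have : (s * dotv d d) * (1 - beta) < (s * dotv d d) * (L * s).
  have := ler_wpM2l (ltW s0) descent; move: decrease; rewrite mulrDr; lra.
by rewrite ltr_pM2l // -ltr_pdivrMl // mulrC => /ltW.
Qed.

Lemma IRG_stepsize_ge {beta gamma tau : R} {x g d : 'rV[R]_n} {eps r t : R} :
  0 < beta < 1 -> 0 < gamma -> enorm (x - xbar) <= del / 2 ->
  enorm (g - grad x) <= eps -> 0 < r ->
  (if enorm g <= r + eps then d = 0
   else d = - ((enorm g - eps) / enorm g) *: g) ->
  (if d == 0 then t = tau
   else exists j : nat,
     [/\ t = gamma ^+ j, armijo f beta x d (gamma ^+ j) &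
         forall i : nat, (i < j)%N -> ~ armijo f beta x d (gamma ^+ i)]) ->
  Num.min tau (Num.min 1
    (gamma * Num.min ((1 - beta) / L) (del / (2 * (enorm (grad xbar) + L * del)))))
  <= t.
Proof.
move=> beta01 gamma0 x_near g_close r0 def_d.
case: eqP => [_ -> | d_neq0 [j [-> _ fails]]]; first by rewrite ge_min lexx.
move: def_d; case: ifP => [_ d0 | /negbT]; first by case: d_neq0.
rewrite -ltNge => g_long def_d; subst d.
have eps_lt : eps < enorm g by apply: lt_trans g_long; rewrite ltrDr.
have x_in_ball : enorm (x - xbar) < del.
  by apply: le_lt_trans x_near _; rewrite ltr_pdivrMr //; have := del_gt0; lra.
rewrite ge_min; apply/orP; right.
apply: (backtracking_step_ge gamma0 _ fails) => s s0.
apply: armijo_fail_ge => //; first exact: shortened_dir_descent.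
apply/andP; split; first by rewrite (enorm_shortened_dir g_close eps_lt) subr_gt0.
exact: le_trans (enorm_shortened_dir_le g_close eps_lt) (enorm_grad_le _ x_in_ball).
Qed.

End LipschitzGradient.

Lemma lipschitz_near_pos (R : realType) (n : nat) (grad : 'rV[R]_n -> 'rV[R]_n) xbar :
  lipschitz_near grad xbar -> exists del L : R, [/\ 0 < del, 0 < L &
    forall y z, enorm (y - xbar) < del -> enorm (z - xbar) < del ->
      enorm (grad y - grad z) <= L * enorm (y - z)].
Proof.
move=> [del [L [del0 lip]]]; exists del, (`|L| + 1); split; rewrite ?ltr_wpDl //.
move=> y z y_near z_near; apply: le_trans (lip y z y_near z_near) _.
by rewrite ler_wpM2r ?enorm_ge0 // (le_trans (ler_norm L)) // lerDl.
Qed.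

Lemma prefix_lower_bound {R : realType} {t : nat -> R} (N : nat) :
  (forall k, 0 < t k) -> exists2 c : R, 0 < c & forall k, (k < N)%N -> c <= t k.
Proof.
move=> t_gt0; elim: N => [|N [c c0 le_c]]; first by exists 1.
exists (Num.min c (t N)); first by rewrite lt_min c0 t_gt0.
move=> k; rewrite ltnS leq_eqVlt => /orP [/eqP -> | kN]; rewrite ge_min.
  by rewrite lexx orbT.
by rewrite le_c.
Qed.

Lemma IRG_r_gt0 {R : realType} {n : nat} {f grad mu theta rho}
    {x g d : nat -> 'rV[R]_n} {eps r t} :
  IRG_iterates f grad mu theta rho x g d eps r t -> forall k, 0 < r k.
Proof.
move=> [_ [r0 [/andP[mu0 _] [_ [_ iter]]]]]; elim=> // k IH.
have [_ [+ _]] := iter k.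
by case: ifP => _ [-> _ _] //; rewrite mulr_gt0.
Qed.

Theorem mainTheorem15 (R : realType) (n : nat)
  (f : 'rV[R]_n -> R) (grad : 'rV[R]_n -> 'rV[R]_n)
  (mu theta beta gamma tau : R) (rho : nat -> R)
  (x g d : nat -> 'rV[R]_n) (eps r t : nat -> R)
  (J : nat -> bool) (xbar : 'rV[R]_n) :
  C1_with_gradient f grad ->
  IRG_iterates f grad mu theta rho x g d eps r t ->
  backtracking f beta gamma tau x d t ->
  (forall e : R, 0 < e -> exists N : nat, forall k, (N <= k)%N -> `|rho k| <= e) ->
  (forall N : nat, exists k : nat, (N <= k)%N /\ J k) ->
  (forall e : R, 0 < e -> exists N : nat, forall k, (N <= k)%N -> J k ->
       enorm (x k - xbar) <= e) ->
  lipschitz_near grad xbar ->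
  exists c : R, 0 < c /\ forall k, J k -> c <= t k.
Proof.
move=> [f_grad _] irg [beta01 [/andP[gamma0 _] [/andP[tau0 _] bt]]] _ _ x_cvg.
move=> /lipschitz_near_pos [del [L [del0 L0 lip]]].
have r_gt0 := IRG_r_gt0 irg; have [_ [_ [_ [_ [_ iter]]]]] := irg.
have [N near_xbar] := x_cvg (del / 2) (divr_gt0 del0 (ltr0n _ 2)).
have t_gt0 k : 0 < t k by have [_ [_ []]] := iter k.
have [c0 c0_gt0 le_c0] := prefix_lower_bound N t_gt0.
pose M := enorm (grad xbar) + L * del.
have M0 : 0 < M by rewrite ltr_wpDl ?enorm_ge0 ?mulr_gt0.
exists (Num.min c0 (Num.min tau (Num.min 1
  (gamma * Num.min ((1 - beta) / L) (del / (2 * M)))))).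
split=> [|k Jk].
  case/andP: beta01 => _ beta1.
  by rewrite !lt_min c0_gt0 tau0 ltr01 mulr_gt0 // lt_min !divr_gt0 ?subr_gt0 ?mulr_gt0.
rewrite ge_min; case: (ltnP k N) => [kN | Nk]; first by rewrite le_c0.
have [g_close [def_d _]] := iter k.
have {}g_close : enorm (g k - grad (x k)) <= eps k.
  by apply: le_trans g_close _; rewrite ge_min lexx.
apply/orP; right; apply: (IRG_stepsize_ge f_grad del0 L0 lip beta01 gamma0
  (near_xbar k Nk Jk) g_close (r_gt0 k) _ (bt k)).
by move: def_d; case: ifP => _ [_ _ ->].
Qed.
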